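(* Let $\lambda$ be a nonzero real number. For any integer $p\ge1$, \[ \sum_{k=1}^{\infty}\frac{H_{k,\lambda}^{(p)}}{k(k+1)}=\zeta_{\lambda}(p+1), \] and \[ \sum_{k=1}^{\infty}\frac{H_{k,\lambda}^{(p)}}{k(k+2)}=\frac{1}{2}\bigg(\zeta_{\lambda}(p+1)+\sum_{k=2}^{p}(-1)^{k}\zeta_{\lambda}(p+2-k)+\frac{(-1)^{p+1}}{\lambda+1}\bigg), \] i.e. $\frac12\big(\zeta_{\lambda}(p+1)+\zeta_{\lambda}(p)-\zeta_{\lambda}(p-1)+\cdots+(-1)^{p}\zeta_{\lambda}(2)+\frac{(-1)^{p+1}}{\lambda+1}\big)$.
   Context: For real $x$ and $\mu\neq 0$, set $(x)_{0,\mu}=1$ and $(x)_{n,\mu}=x(x-\mu)\cdots(x-(n-1)\mu)$ for $n\ge1$. The degenerate zeta function is $\zeta_{\lambda}(s)=\sum_{n=1}^{\infty}\frac{(-1)^{n-1}\lambda^{n-1}(1)_{n,1/\lambda}}{(n-1)!\,n^{s}}$ for $\mathrm{Re}(s)>1$. The degenerate higher-order harmonic numbers are $H_{0,\lambda}^{(k)}=0$ and $H_{n,\lambda}^{(k)}=\sum_{l=1}^{n}\frac{(-\lambda)^{l-1}(1)_{l,1/\lambda}}{l^{k}(l-1)!}$ for $n\ge1$.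
   Formalization: The first identity assumes that the series defining $\zeta_{\lambda}(p+1)$ converges, and the second that the series defining $\zeta_{\lambda}(s)$ converges for every integer s with 2 ≤ s ≤ p+1. The statement above fails without it. *)

From Stdlib Require Import Reals Factorial.
From Coquelicot Require Import Coquelicot.
Open Scope R_scope.

Fixpoint dfall (x mu : R) (n : nat) : R :=
  match n with
  | O => 1
  | S m => dfall x mu m * (x - INR m * mu)
  end.

Definition zcoef (lam : R) (n : nat) : R :=
  (-1) ^ (n - 1) * lam ^ (n - 1) * dfall 1 (/ lam) n / INR (fact (n - 1)).

Definition zeta_term (lam : R) (s : nat) (n : nat) : R :=
  zcoef lam n / INR n ^ s.

Definition zeta_lam (lam : R) (s : nat) : R :=
  Series (fun n => zeta_term lam s (S n)).

Fixpoint harm (lam : R) (k : nat) (n : nat) : R :=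
  match n with
  | O => 0
  | S m => harm lam k m + zcoef lam (S m) / INR (S m) ^ k
  end.

From Stdlib Require Import Reals Lra Lia Psatz.
From Coquelicot Require Import Coquelicot.
Open Scope R_scope.

(* Write a_n = zcoef lam n and b_n = a_n / n^(p+1), so that H_k = sum_(n <= k) n b_n.
   Abel summation against 1/(k(k+1)) = 1/k - 1/(k+1) turns the N-th partial sum
   into sum_(n <= N) b_n - H_N/(N+1), and H_N/(N+1) -> 0 by Kronecker's lemma.
   Against 1/(k(k+2)) = (1/k - 1/(k+2))/2 the same computation leaves, besides
   zeta_lam (p+1), the series c_q = sum_n a_n/(n^q (n+1)) at q = p.  As
   1/(n^(q+1)(n+1)) = 1/n^(q+1) - 1/(n^q (n+1)), c_(q+1) = zeta_lam (q+1) - c_q,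
   which unwinds into the alternating sum, down to c_1 = 1/(lam+1): the recursion
   a_(n+1) = a_n (1 - lam/n) makes (1+lam) a_n/(n(n+1)) = a_n/n - a_(n+1)/(n+1)
   telescope, and a_n/n -> 0 because it has a limit while sum_n a_n/n^2
   converges.  Convergence of c_1 itself comes from comparison with
   sum_n a_n/n^2, which converges absolutely since a_n eventually keeps a
   constant sign. *)

Ltac INR_expand := repeat (rewrite plus_INR || rewrite S_INR); rewrite ?INR_0.

Ltac INR_neq_0 :=
  repeat split; try assumption; try apply pow_nonzero; INR_expand;
  repeat match goal with |- context [INR ?n] =>
    lazymatch goal with _ : 0 <= INR n |- _ => fail | _ => pose proof (pos_INR n) end end;
  lra.

(* [sum_n] and [sum_n_m] land in the carrier of a Coquelicot structure, and
   [field] only recognises equations stated at type [R]; hence also the [:> R]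
   in several statements below. *)
Ltac field_INR :=
  lazymatch goal with |- ?a = ?b => change (@eq R a b) end;
  INR_expand; field; INR_neq_0.

Lemma is_lim_seq_inv_INR_S : is_lim_seq (fun n => / INR (S n)) 0.
Proof.
  apply (is_lim_seq_inv (fun n => INR (S n)) p_infty).
  - exact (proj1 (is_lim_seq_incr_1 _ _) is_lim_seq_INR).
  - discriminate.
Qed.

Lemma is_lim_seq_INR_ratio (k : nat) : is_lim_seq (fun n => INR (S n) / INR (S n + k)) 1.
Proof.
  assert (Hinv : is_lim_seq (fun n => / INR (S (n + k))) 0)
    by exact (proj1 (is_lim_seq_incr_n _ k 0) is_lim_seq_inv_INR_S).
  pose proof (is_lim_seq_minus' _ _ 1 (INR k * 0) (is_lim_seq_const 1)
                (is_lim_seq_scal_l _ (INR k) 0 Hinv)) as H.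
  rewrite Rmult_0_r, Rminus_0_r in H.
  eapply is_lim_seq_ext; [|exact H].
  intro n. field_INR.
Qed.

Lemma is_lim_seq_cesaro (u : nat -> R) (l : R) :
  is_lim_seq u l -> is_lim_seq (fun N => sum_n u N / INR (S N)) l.
Proof.
  intro Hu.
  pose proof (Cesaro_1 u l (proj1 (is_lim_seq_Reals _ _) Hu)) as H.
  apply is_lim_seq_Reals, is_lim_seq_incr_1 in H.
  eapply is_lim_seq_ext; [|exact H].
  intro n. rewrite sum_n_Reals. reflexivity.
Qed.

Lemma sum_n_Sn_R (a : nat -> R) (n : nat) : sum_n a (S n) = sum_n a n + a (S n) :> R.
Proof. exact (sum_Sn a n). Qed.

Lemma sum_n_mult_INR_S (b : nat -> R) (N : nat) :
  sum_n (fun k => INR (S k) * b k) N = INR (S (S N)) * sum_n b N - sum_n (sum_n b) N :> R.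
Proof.
  induction N as [|N IH].
  - rewrite !sum_O, !S_INR. simpl. ring.
  - rewrite !sum_n_Sn_R, IH. rewrite !S_INR. simpl. ring.
Qed.

Lemma kronecker (b : nat -> R) (l : R) : is_series b l ->
  is_lim_seq (fun N => sum_n (fun k => INR (S k) * b k) N / INR (S N)) 0.
Proof.
  intro Hb.
  assert (Hs : is_lim_seq (sum_n b) l) by exact Hb.
  assert (Hratio : is_lim_seq (fun N => 1 + / INR (S N)) (1 + 0))
    by exact (is_lim_seq_plus' _ _ 1 0 (is_lim_seq_const 1) is_lim_seq_inv_INR_S).
  pose proof (is_lim_seq_minus' _ _ _ _ (is_lim_seq_mult' _ _ _ _ Hratio Hs)
                (is_lim_seq_cesaro _ _ Hs)) as H.
  replace ((1 + 0) * l - l) with 0 in H by ring.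
  eapply is_lim_seq_ext; [|exact H]. intro N.
  rewrite sum_n_mult_INR_S, (S_INR (S N)). field_INR.
Qed.

Lemma is_lim_seq_zero_of_ex_series_div (d : nat -> R) (L : R) :
  is_lim_seq d L -> ex_series (fun n => d n / INR (S n)) -> L = 0.
Proof.
  intros Hd [l Hl].
  assert (Hmean : is_lim_seq (fun N => sum_n d N / INR (S N)) 0).
  { eapply is_lim_seq_ext; [|exact (kronecker _ _ Hl)]. intro N.
    cbv beta. f_equal. apply sum_n_ext. intro k. field_INR. }
  pose proof (is_lim_seq_unique _ _ (is_lim_seq_cesaro _ _ Hd)) as HL.
  rewrite (is_lim_seq_unique _ _ Hmean) in HL.
  injection HL. auto.
Qed.

Lemma ex_series_Rabs_of_tail_sign (b : nat -> R) (M : nat) : ex_series b ->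
  (forall k, 0 <= b (M + k)%nat) \/ (forall k, b (M + k)%nat <= 0) ->
  ex_series (fun n => Rabs (b n)).
Proof.
  intros Hb Hsign.
  apply (ex_series_incr_n _ M). apply (ex_series_incr_n _ M) in Hb.
  destruct Hsign as [Hpos|Hneg].
  - eapply ex_series_ext; [|exact Hb]. intro k. symmetry. apply Rabs_pos_eq, Hpos.
  - apply ex_series_opp in Hb.
    eapply ex_series_ext; [|exact Hb]. intro k. symmetry. apply Rabs_left1, Hneg.
Qed.

Lemma zcoef_1 (lam : R) : zcoef lam 1 = 1.
Proof. unfold zcoef. simpl. unfold Rdiv. rewrite Rinv_1. ring. Qed.

Lemma zcoef_S (lam : R) (n : nat) : lam <> 0 ->
  zcoef lam (S (S n)) = zcoef lam (S n) * (1 - lam / INR (S n)).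
Proof.
  intro Hlam. unfold zcoef.
  replace (S (S n) - 1)%nat with (S n) by lia.
  replace (S n - 1)%nat with n by lia.
  change (dfall 1 (/ lam) (S (S n))) with (dfall 1 (/ lam) (S n) * (1 - INR (S n) * / lam)).
  rewrite fact_simpl, mult_INR. simpl pow.
  field. pose proof (INR_fact_neq_0 n). INR_neq_0.
Qed.

Lemma zcoef_tail_sign (lam : R) : lam <> 0 -> exists M : nat,
  (forall k, 0 <= zcoef lam (S (M + k))) \/ (forall k, zcoef lam (S (M + k)) <= 0).
Proof.
  intro Hlam.
  destruct (INR_archimed 1 lam Rlt_0_1) as [M HM]. rewrite Rmult_1_r in HM.
  assert (Hfactor : forall k, 0 < 1 - lam / INR (S (M + k))).
  { intro k. assert (Hk : 0 < INR (S (M + k))) by (apply lt_0_INR; lia).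
    assert (HMk : INR M <= INR (M + k)) by (apply le_INR; lia).
    rewrite S_INR in *. apply Rlt_0_minus, Rlt_div_l; lra. }
  assert (Hstep : forall k, zcoef lam (S (M + S k))
                            = zcoef lam (S (M + k)) * (1 - lam / INR (S (M + k)))).
  { intro k. rewrite <- plus_n_Sm. apply zcoef_S, Hlam. }
  exists M. destruct (Rle_lt_dec 0 (zcoef lam (S M))) as [H0|H0]; [left|right];
    intro k; induction k as [|k IH].
  all: rewrite ?Nat.add_0_r, ?Hstep; try pose proof (Hfactor k); nra.
Qed.

Lemma harm_S_sum_n (lam : R) (p n : nat) :
  harm lam p (S n) = sum_n (fun k => INR (S k) * zeta_term lam (p + 1) (S k)) n.
Proof.
  assert (Hterm : forall k, INR (S k) * zeta_term lam (p + 1) (S k)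
                            = zcoef lam (S k) / INR (S k) ^ p).
  { intro k. unfold zeta_term. rewrite pow_add, pow_1. field_INR. }
  induction n as [|n IH].
  - rewrite sum_O, Hterm. simpl. ring.
  - rewrite sum_n_Sn_R, <- IH, Hterm. reflexivity.
Qed.

Lemma is_lim_seq_harm_div (lam : R) (p k : nat) : ex_series (fun n => zeta_term lam (p + 1) (S n)) ->
  is_lim_seq (fun N => harm lam p (S N) / INR (S N + k)) 0.
Proof.
  intros [l Hl].
  pose proof (is_lim_seq_mult' _ _ _ _ (kronecker _ _ Hl) (is_lim_seq_INR_ratio k)) as H.
  rewrite Rmult_0_l in H.
  eapply is_lim_seq_ext; [|exact H]. intro N. cbv beta. rewrite harm_S_sum_n. field_INR.
Qed.

Lemma sum_n_harm_div_k_k1 (lam : R) (p N : nat) :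
  sum_n (fun n => harm lam p (S n) / (INR (S n) * INR (S n + 1))) N
  = sum_n (fun n => zeta_term lam (p + 1) (S n)) N - harm lam p (S N) / INR (S N + 1) :> R.
Proof.
  induction N as [|N IH].
  - rewrite !sum_O. unfold zeta_term. cbn [harm]. rewrite pow_add. field_INR.
  - rewrite !sum_n_Sn_R, IH. unfold zeta_term. cbn [harm]. rewrite pow_add. field_INR.
Qed.

Definition zeta_mixed_term (lam : R) (q n : nat) : R :=
  zcoef lam n / (INR n ^ q * INR (n + 1)).

Lemma sum_n_harm_div_k_k2 (lam : R) (p N : nat) :
  2 * sum_n (fun n => harm lam p (S n) / (INR (S n) * INR (S n + 2))) N
  = sum_n (fun n => zeta_term lam (p + 1) (S n)) N
    + sum_n (fun n => zeta_mixed_term lam p (S n)) N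
    - harm lam p (S N) / INR (S N + 1) - harm lam p (S N) / INR (S N + 2).
Proof.
  unfold zeta_mixed_term, zeta_term.
  induction N as [|N IH].
  - rewrite !sum_O. cbn [harm]. rewrite pow_add. field_INR.
  - rewrite !sum_n_Sn_R, Rmult_plus_distr_l, IH. cbn [harm]. rewrite !pow_add. field_INR.
Qed.

Lemma zeta_mixed_term_S (lam : R) (q n : nat) :
  zeta_mixed_term lam (S q) (S n) = zeta_term lam (S q) (S n) - zeta_mixed_term lam q (S n).
Proof. unfold zeta_mixed_term, zeta_term. rewrite <- tech_pow_Rmult. field_INR. Qed.

Lemma sum_n_zeta_mixed_1 (lam : R) (N : nat) : lam <> 0 ->
  (1 + lam) * sum_n (fun n => zeta_mixed_term lam 1 (S n)) N
  = 1 - zcoef lam (S (S N)) / INR (S (S N)).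
Proof.
  intro Hlam. unfold zeta_mixed_term.
  induction N as [|N IH].
  - rewrite sum_O, zcoef_S, zcoef_1 by exact Hlam. field_INR.
  - rewrite sum_n_Sn_R, Rmult_plus_distr_l, IH, (zcoef_S lam (S N)) by exact Hlam. field_INR.
Qed.

Lemma ex_series_zeta_mixed_1 (lam : R) : lam <> 0 ->
  ex_series (fun n => zeta_term lam 2 (S n)) ->
  ex_series (fun n => zeta_mixed_term lam 1 (S n)).
Proof.
  intros Hlam Hzeta.
  destruct (zcoef_tail_sign lam Hlam) as [M HM].
  apply ex_series_Rabs, (@ex_series_le R_AbsRing R_CompleteNormedModule _
                                 (fun n => Rabs (zeta_term lam 2 (S n)))).
  - intro n. change (norm (Rabs ?x)) with (Rabs (Rabs x)). rewrite Rabs_Rabsolu.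
    assert (Hpos : 0 < INR (S n)) by (apply lt_0_INR; lia).
    assert (E : zeta_mixed_term lam 1 (S n)
                = zeta_term lam 2 (S n) * (INR (S n) / (INR (S n) + 1))).
    { unfold zeta_mixed_term, zeta_term. field_INR. }
    assert (Hratio : 0 <= INR (S n) / (INR (S n) + 1) <= 1).
    { split; [apply Rdiv_le_0_compat; lra | apply (Rdiv_le_1 (INR (S n)) (INR (S n) + 1)); lra]. }
    rewrite E, Rabs_mult, (Rabs_pos_eq _ (proj1 Hratio)).
    pose proof (Rabs_pos (zeta_term lam 2 (S n))). nra.
  - apply (ex_series_Rabs_of_tail_sign _ M Hzeta).
    assert (Hinv : forall k, 0 < / INR (S (M + k)) ^ 2)
      by (intro k; apply Rinv_0_lt_compat, pow_lt, lt_0_INR; lia).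
    unfold zeta_term, Rdiv.
    destruct HM as [H|H]; [left|right]; intro k;
      pose proof (H k); pose proof (Hinv k); nra.
Qed.

Lemma is_series_zeta_mixed_1 (lam : R) : lam <> 0 ->
  ex_series (fun n => zeta_term lam 2 (S n)) ->
  is_series (fun n => zeta_mixed_term lam 1 (S n)) (/ (lam + 1)).
Proof.
  intros Hlam Hzeta.
  destruct (ex_series_zeta_mixed_1 lam Hlam Hzeta) as [c Hc].
  assert (Hlim : is_lim_seq (fun n => zcoef lam (S n) / INR (S n)) (1 - (1 + lam) * c)).
  { apply is_lim_seq_incr_1.
    assert (Hsum : is_lim_seq (sum_n (fun n => zeta_mixed_term lam 1 (S n))) c) by exact Hc.
    pose proof (is_lim_seq_minus' _ _ _ _ (is_lim_seq_const 1)
                  (is_lim_seq_mult' _ _ _ _ (is_lim_seq_const (1 + lam)) Hsum)) as H.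
    eapply is_lim_seq_ext; [|exact H]. intro n. cbv beta.
    rewrite sum_n_zeta_mixed_1 by exact Hlam. ring. }
  assert (Hzero : 1 - (1 + lam) * c = 0).
  { apply (is_lim_seq_zero_of_ex_series_div _ _ Hlim).
    eapply ex_series_ext; [|exact Hzeta]. intro n. unfold zeta_term. field_INR. }
  replace (/ (lam + 1)) with c; [exact Hc|].
  assert (Hlam1 : lam + 1 <> 0) by (intro E; rewrite Rplus_comm, E in Hzero; lra).
  apply (Rmult_eq_reg_l (lam + 1)); [|exact Hlam1]. rewrite Rinv_r; lra.
Qed.

Lemma sum_n_m_alt_S (f : nat -> R) (q : nat) : (1 <= q)%nat ->
  sum_n_m (fun k => (-1) ^ k * f (S q + 2 - k)%nat) 2 (S q)
  = f (S q) - sum_n_m (fun k => (-1) ^ k * f (q + 2 - k)%nat) 2 q :> R.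
Proof.
  intro Hq.
  rewrite sum_Sn_m, <- sum_n_m_S by lia.
  rewrite (sum_n_m_ext _ (fun k => mult (-1) ((-1) ^ k * f (q + 2 - k)%nat))).
  2:{ intro k. replace (S q + 2 - S k)%nat with (q + 2 - k)%nat by lia.
      unfold mult. simpl. ring. }
  rewrite sum_n_m_mult_l.
  replace (S q + 2 - 2)%nat with (S q) by lia.
  unfold plus, mult. simpl.
  set (s := sum_n_m _ 2 q). ring.
Qed.

Lemma is_series_zeta_mixed (lam : R) (q : nat) : lam <> 0 -> (1 <= q)%nat ->
  (forall s, (2 <= s <= S q)%nat -> ex_series (fun n => zeta_term lam s (S n))) ->
  is_series (fun n => zeta_mixed_term lam q (S n))
    (sum_n_m (fun k => (-1) ^ k * zeta_lam lam (q + 2 - k)) 2 q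
     + (-1) ^ (q + 1) / (lam + 1)).
Proof.
  intros Hlam Hq. induction q as [|q IH]; [lia|]. intro Hzeta.
  destruct q as [|q].
  - rewrite sum_n_m_zero by lia.
    replace (zero + _) with (/ (lam + 1)) by (unfold zero; simpl; unfold Rdiv; ring).
    apply (is_series_zeta_mixed_1 lam Hlam), Hzeta; lia.
  - assert (Hz : is_series (fun n => zeta_term lam (S (S q)) (S n)) (zeta_lam lam (S (S q))))
      by (apply Series_correct, Hzeta; lia).
    assert (Hv := IH ltac:(lia) (fun s Hs => Hzeta s ltac:(lia))).
    rewrite sum_n_m_alt_S by lia.
    set (A := sum_n_m _ 2 (S q)) in *.
    replace (zeta_lam lam (S (S q)) - A + (-1) ^ (S (S q) + 1) / (lam + 1))
      with (zeta_lam lam (S (S q)) - (A + (-1) ^ (S q + 1) / (lam + 1)))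
      by (simpl; unfold Rdiv; ring).
    eapply is_series_ext; [|exact (is_series_minus _ _ _ _ Hz Hv)].
    intro n. symmetry. apply zeta_mixed_term_S.
Qed.

Lemma is_series_of_sum_n (a u v : nat -> R) (l : R) :
  (forall N, sum_n a N = u N - v N :> R) -> is_lim_seq u l -> is_lim_seq v 0 ->
  is_series a l.
Proof.
  intros Hsum Hu Hv.
  pose proof (is_lim_seq_minus' _ _ _ _ Hu Hv) as H.
  rewrite Rminus_0_r in H.
  apply (is_lim_seq_ext _ _ _ (fun N => eq_sym (Hsum N)) H).
Qed.

Lemma is_series_harm_div_k_k1 (lam : R) (p : nat) :
  ex_series (fun n => zeta_term lam (p + 1) (S n)) ->
  is_series (fun n => harm lam p (S n) / (INR (S n) * INR (S n + 1)))
            (zeta_lam lam (p + 1)).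
Proof.
  intro Hzeta.
  apply (is_series_of_sum_n _ _ _ _ (sum_n_harm_div_k_k1 lam p)).
  - exact (Series_correct _ Hzeta).
  - exact (is_lim_seq_harm_div lam p 1 Hzeta).
Qed.

Lemma is_series_harm_div_k_k2 (lam : R) (p : nat) (c : R) :
  ex_series (fun n => zeta_term lam (p + 1) (S n)) ->
  is_series (fun n => zeta_mixed_term lam p (S n)) c ->
  is_series (fun n => harm lam p (S n) / (INR (S n) * INR (S n + 2)))
            (/ 2 * (zeta_lam lam (p + 1) + c)).
Proof.
  intros Hzeta Hc.
  apply (is_series_of_sum_n _
    (fun N => / 2 * (sum_n (fun n => zeta_term lam (p + 1) (S n)) N
                     + sum_n (fun n => zeta_mixed_term lam p (S n)) N))
    (fun N => / 2 * (harm lam p (S N) / INR (S N + 1) + harm lam p (S N) / INR (S N + 2)))).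
  - intro N. apply (Rmult_eq_reg_l 2); [|lra].
    rewrite sum_n_harm_div_k_k2. field_INR.
  - apply (is_lim_seq_mult' (fun _ => / 2)); [apply is_lim_seq_const|].
    apply is_lim_seq_plus'; [exact (Series_correct _ Hzeta) | exact Hc].
  - pose proof (is_lim_seq_mult' (fun _ => / 2) _ _ _ (is_lim_seq_const _)
                  (is_lim_seq_plus' _ _ _ _ (is_lim_seq_harm_div lam p 1 Hzeta)
                                            (is_lim_seq_harm_div lam p 2 Hzeta))) as H.
    rewrite Rplus_0_r, Rmult_0_r in H. exact H.
Qed.

Theorem theorem5 (lam : R) (p : nat) :
  lam <> 0 -> (1 <= p)%nat ->
  (ex_series (fun n => zeta_term lam (p + 1) (S n)) ->
   is_series (fun n => harm lam p (S n) / (INR (S n) * INR (S n + 1)))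
             (zeta_lam lam (p + 1)))
  /\
  ((forall s : nat, (2 <= s <= p + 1)%nat ->
      ex_series (fun n => zeta_term lam s (S n))) ->
   is_series (fun n => harm lam p (S n) / (INR (S n) * INR (S n + 2)))
     (/ 2 * (zeta_lam lam (p + 1)
             + sum_n_m (fun k => (-1) ^ k * zeta_lam lam (p + 2 - k)) 2 p
             + (-1) ^ (p + 1) / (lam + 1)))).
Proof.
  intros Hlam Hp. split.
  - apply is_series_harm_div_k_k1.
  - intro Hzeta. rewrite Rplus_assoc.
    apply is_series_harm_div_k_k2.
    + apply Hzeta. lia.
    + apply (is_series_zeta_mixed lam p Hlam Hp). intros s Hs. apply Hzeta. lia.
Qed.
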